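(* Let $K$ be a sequence of positive integers approaching $\infty$, let $s\ge2$ be an integer, let $\mathbf b\in\mathcal{F}_s$, and let $A_{\mathbf b}=\{n\in\mathbb{N}:\mathrm{LB}_s(K_n)=\mathbf b\}$. Then there are real numbers $\gamma_n=o(1)$ and $\widetilde\gamma_n=o(1)$ such that $n\in A_{\mathbf b}$ if and only if $$\log_\phi(\mathbf b\cdot\widehat F)+\gamma_n\le\{\mathfrak F^{-1}(K_n)\}<\log_\phi(\widetilde{\mathbf b}\cdot\widehat F)+\widetilde\gamma_n,$$ where $\widetilde\gamma_n=0$ if $\mathbf b$ is the largest block in $\mathcal{F}_s$.
   Context: $F$: $F_1=1,F_2=2,F_{n+2}=F_{n+1}+F_n$. Zeckendorf expansion: $m=\sum_{k=1}^M\epsilon(k)F_{M-k+1}$ uniquely with $\epsilon(k)\in\{0,1\}$, $\epsilon(1)=1$, $\epsilon(k)\epsilon(k+1)=0$; $\mathrm{LB}_s(m)=(\epsilon(1),\dots,\epsilon(s))$ if $M\ge s$. $\mathcal{F}_s$ ($s\ge2$) is the set of all $\mathrm{LB}_s(m)$, listed $\mathbf b_1,\dots,\mathbf b_\ell$ with $1+\mathbf b_k*F=\mathbf b_{k+1}*F$, $\mathbf b*F=\sum_{k=1}^s\mathbf b(k)F_{s-k+1}$; $\mathbf b_\ell$ is the largest block. $\mathbf b_{\ell+1}:=(1,0,1,0,\dots,1,0,1,1)$ if $s$ even, $(1,0,1,0,\dots,1,1,0)$ if $s$ odd (length $s$); $\widetilde{\mathbf b_k}:=\mathbf b_{k+1}$.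 $\omega=\phi^{-1}$, $\mathbf b\cdot\widehat F=\sum_k\mathbf b(k)\omega^{k-1}$. $\mathfrak F(x)=\frac{\phi}{\sqrt5}(\phi^x+\phi^{-x}\cos(\pi x)\phi^{-2})$, increasing on $[1,\infty)$ with inverse $\mathfrak F^{-1}$; $\{y\}$ is the fractional part. *)

From Stdlib Require Import Reals Lra Lia Arith List ClassicalEpsilon.
Open Scope R_scope.

(* Fibonacci numbers with F_1 = 1, F_2 = 2, F_{n+2} = F_{n+1} + F_n.
   (fibF 0 = 1 is an unused filler value.) *)
Fixpoint fibF (n : nat) : nat :=
  match n with
  | O => 1%nat
  | S O => 1%nat
  | S ((S k) as k1) => (fibF k1 + fibF k)%nat
  end.

(* For a digit list e = (e(1),...,e(M)) : sum_k e(k) F_{M-k+1}.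
   Applied to a block b of length s this is b * F. *)
Fixpoint weight (e : list bool) : nat :=
  match e with
  | nil => 0%nat
  | x :: t => ((if x then fibF (S (length t)) else 0) + weight t)%nat
  end.

Definition is_zeck (m : nat) (e : list bool) : Prop :=
  e <> nil /\ nth 0 e false = true /\
  (forall k, (S k < length e)%nat -> ~ (nth k e false = true /\ nth (S k) e false = true)) /\
  m = weight e.

Definition LB (s m : nat) (b : list bool) : Prop :=
  exists e, is_zeck m e /\ (s <= length e)%nat /\ firstn s e = b.

Definition Fs (s : nat) (b : list bool) : Prop := exists m : nat, LB s m b.

Definition is_largest (s : nat) (b : list bool) : Prop :=
  Fs s b /\ forall c, Fs s c -> (weight c <= weight b)%nat.

(* b_{l+1}: (1,0,...,1,0,1,1) for s even, (1,0,...,1,1,0) for s odd. *)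
Definition special_block (s : nat) : list bool :=
  if Nat.even s
  then map (fun k => orb (Nat.odd k) (Nat.eqb k s)) (seq 1 s)
  else map (fun k => orb (andb (Nat.odd k) (Nat.ltb k s)) (Nat.eqb k (s - 1))) (seq 1 s).

(* tilde b : the next block b_{k+1} of F_s (with 1 + b_k*F = b_{k+1}*F),
   or b_{l+1} if there is none (b largest). *)
Definition btilde (s : nat) (b : list bool) : list bool :=
  epsilon (inhabits nil) (fun c =>
    (Fs s c /\ weight c = S (weight b)) \/
    ((~ exists c', Fs s c' /\ weight c' = S (weight b)) /\ c = special_block s)).

Definition phi : R := (1 + sqrt 5) / 2.
Definition omega : R := / phi.

(* b . hatF = sum_k b(k) omega^(k-1) *)
Fixpoint hatF (b : list bool) : R :=
  match b with
  | nil => 0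
  | x :: t => (if x then 1 else 0) + omega * hatF t
  end.

Definition logphi (x : R) : R := ln x / ln phi.

Definition frakF (x : R) : R :=
  phi / sqrt 5 * (Rpower phi x + Rpower phi (- x) * cos (PI * x) * Rpower phi (-2)).

Definition frakF_inv (y : R) : R :=
  epsilon (inhabits 0) (fun x => 1 <= x /\ frakF x = y).

From Stdlib Require Import Reals List Lra Lia Arith ClassicalEpsilon FunctionalExtensionality.
From Coquelicot Require Import Coquelicot.
Open Scope R_scope.

(** Let [F_M <= K < F_(M+1)], so that the Zeckendorf expansion of [K] has
    [M = s + m] digits, and let [weight_shift m c] be the integer whose expansion
    is the block [c] followed by [m] zeros.  Then [LB_s(K) = b] iff
    [weight_shift m b <= K < weight_shift m b~] for the successor block [b~]; for
    the largest block the right end becomes [F_(M+1)], which [K] never reaches.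
    By Binet's formula, [weight_shift m c] and [K = 𝔉(x)], [x = 𝔉^-1(K) ∈ [M, M+1)],
    are [φ^(M+1)/√5] times [c·F̂] and [φ^(x-M)] respectively, up to an additive
    error [O(s)], i.e. a relative error [O(s/K)].  Taking [log_φ] turns the
    interval into [log_φ(b·F̂) <= {x} < log_φ(b~·F̂)] up to [O(s/K) = o(1)]; for the
    largest block [b~·F̂ = φ], so the right end [{x} < 1] is exact. *)

(** * Zeckendorf expansions and leading blocks *)

Lemma fibF_SS k : fibF (S (S k)) = (fibF (S k) + fibF k)%nat.
Proof. reflexivity. Qed.

Lemma fibF_pos k : (1 <= fibF k)%nat.
Proof.
  induction k as [k IH] using lt_wf_ind.
  destruct k as [|[|k]]; [simpl; lia | simpl; lia |].
  rewrite fibF_SS. specialize (IH k). lia.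
Qed.

Lemma fibF_le_S k : (fibF k <= fibF (S k))%nat.
Proof. destruct k; simpl; [lia|]. pose proof (fibF_pos k). lia. Qed.

Lemma fibF_lt_S k : (1 <= k)%nat -> (fibF k < fibF (S k))%nat.
Proof. intros. destruct k; [lia|]. rewrite fibF_SS. pose proof (fibF_pos k). lia. Qed.

Lemma fibF_monotone j k : (j <= k)%nat -> (fibF j <= fibF k)%nat.
Proof. induction 1; [lia|]. pose proof (fibF_le_S m). lia. Qed.

Lemma fibF_ge_id n : (n <= fibF n)%nat.
Proof.
  induction n as [n IH] using lt_wf_ind. destruct n as [|[|n]]; [lia | simpl; lia |].
  rewrite fibF_SS. pose proof (IH (S n) ltac:(lia)). pose proof (fibF_pos n). lia.
Qed.

Lemma fibF_bracket K : (1 <= K)%nat -> exists M, (1 <= M)%nat /\ (fibF M <= K < fibF (S M))%nat.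
Proof.
  induction K as [|K IH]; [lia|]. intros _. destruct K as [|K].
  - exists 1%nat. simpl. lia.
  - destruct IH as [M [HM1 [HM2 HM3]]]; [lia|].
    destruct (Nat.eq_dec (S (S K)) (fibF (S M))) as [E|NE].
    + exists (S M). rewrite fibF_SS. pose proof (fibF_pos M). lia.
    + exists M. lia.
Qed.

Lemma fibF_bracket_unique K M1 M2 :
  (fibF M1 <= K < fibF (S M1))%nat -> (fibF M2 <= K < fibF (S M2))%nat -> M1 = M2.
Proof.
  intros H1 H2. destruct (Nat.lt_trichotomy M1 M2) as [L|[E|L]]; auto.
  - pose proof (fibF_monotone (S M1) M2 L). lia.
  - pose proof (fibF_monotone (S M2) M1 L). lia.
Qed.

Lemma fibF_bracket_ge s K : (fibF s <= K)%nat ->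
  exists m, (fibF (s + m) <= K < fibF (S (s + m)))%nat.
Proof.
  intros HK. destruct (fibF_bracket K ltac:(pose proof (fibF_pos s); lia)) as [M [_ HM]].
  exists (M - s)%nat. replace (s + (M - s))%nat with M; [exact HM|].
  destruct (Nat.le_gt_cases s M) as [|Hlt]; [lia|].
  pose proof (fibF_monotone (S M) s Hlt). lia.
Qed.

Fixpoint nonadjacent (l : list bool) : Prop :=
  match l with
  | x :: ((y :: _) as t) => andb x y = false /\ nonadjacent t
  | _ => True
  end.

Lemma nonadjacent_cons x t : nonadjacent (x :: t) -> nonadjacent t.
Proof. destruct t; simpl; tauto. Qed.

Lemma nonadjacent_nth l : nonadjacent l <->
  forall k, (S k < length l)%nat -> ~ (nth k l false = true /\ nth (S k) l false = true).
Proof.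
  induction l as [|x [|y t] IH]; simpl; [split; auto; lia | split; auto; lia |].
  split.
  - intros [Hxy Ht] [|k] Hk; simpl.
    + intros [-> ->]. discriminate.
    + apply IH; [exact Ht | simpl in *; lia].
  - intros H. split.
    + specialize (H 0%nat ltac:(simpl; lia)). simpl in H. destruct x, y; tauto.
    + apply IH. intros k Hk. apply (H (S k)). simpl in *. lia.
Qed.

Lemma nonadjacent_app_l b t : nonadjacent (b ++ t) -> nonadjacent b.
Proof.
  induction b as [|x [|y b'] IH]; simpl; auto. intros [H1 H2]. split; [exact H1 | apply IH, H2].
Qed.

Lemma nonadjacent_app_r b t : nonadjacent (b ++ t) -> nonadjacent t.
Proof. induction b as [|x b IH]; simpl; auto. intros H. apply IH, (nonadjacent_cons x), H. Qed.

Lemma nonadjacent_app_junction b t :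
  nonadjacent (b ++ t) -> last b false = true -> nth 0 t false = false.
Proof.
  induction b as [|x [|y b'] IH]; simpl.
  - intros _ H. discriminate.
  - destruct t as [|z t']; simpl; auto. intros [H _] ->. exact H.
  - intros H Hl. apply IH; [apply (nonadjacent_cons x), H | exact Hl].
Qed.

Lemma nonadjacent_app b t : nonadjacent b -> nonadjacent t ->
  (last b false = true -> nth 0 t false = false) -> nonadjacent (b ++ t).
Proof.
  induction b as [|x [|y b'] IH]; simpl; auto; intros Hb Ht Hj.
  - destruct t as [|z t']; simpl in *; auto. split; auto. destruct x; simpl in *; auto.
  - split; [apply Hb|]. apply IH; auto. apply Hb.
Qed.

Lemma is_zeck_iff m e :
  is_zeck m e <-> e <> nil /\ nth 0 e false = true /\ nonadjacent e /\ m = weight e.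
Proof. unfold is_zeck. rewrite nonadjacent_nth. tauto. Qed.

(* [weight_shift m l = weight (l ++ repeat false m)]. *)
Fixpoint weight_shift (m : nat) (l : list bool) : nat :=
  match l with
  | nil => 0%nat
  | x :: t => ((if x then fibF (S (length t + m)) else 0) + weight_shift m t)%nat
  end.

Lemma weight_cons x t :
  weight (x :: t) = ((if x then fibF (S (length t)) else 0) + weight t)%nat.
Proof. reflexivity. Qed.

Lemma weight_shift_cons m x t :
  weight_shift m (x :: t) = ((if x then fibF (S (length t + m)) else 0) + weight_shift m t)%nat.
Proof. reflexivity. Qed.

Lemma weight_app b t : weight (b ++ t) = (weight_shift (length t) b + weight t)%nat.
Proof.
  induction b as [|x b IH]; simpl; auto.
  rewrite IH, length_app, Nat.add_comm with (n := length b). lia.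
Qed.

Lemma weight_shift_weight0 l m : weight l = 0%nat -> weight_shift m l = 0%nat.
Proof.
  induction l as [|[] t IH]; intros H; [reflexivity | |].
  - rewrite weight_cons in H. pose proof (fibF_pos (S (length t))). lia.
  - apply IH, H.
Qed.

Lemma weight_lt_fibF l : nonadjacent l -> (weight l < fibF (S (length l)))%nat.
Proof.
  remember (length l) as n eqn:Hn. revert l Hn.
  induction n as [n IH] using lt_wf_ind. intros [|[] t] Hn Hl; subst n; simpl weight.
  - simpl. lia.
  - destruct t as [|[] t']; [simpl; lia | simpl in Hl; destruct Hl; discriminate |].
    specialize (IH (length t') ltac:(simpl; lia) t' eq_refl
                  (nonadjacent_cons _ _ (nonadjacent_cons _ _ Hl))).
    simpl length. simpl weight. rewrite (fibF_SS (S (length t'))), (fibF_SS (length t')). lia.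
  - specialize (IH (length t) ltac:(simpl; lia) t eq_refl (nonadjacent_cons _ _ Hl)).
    pose proof (fibF_le_S (S (length t))). simpl length. lia.
Qed.

Lemma nonadjacent_repr m r : (r < fibF (S m))%nat ->
  exists t, nonadjacent t /\ length t = m /\ weight t = r /\
    ((r < fibF m)%nat -> nth 0 t false = false).
Proof.
  revert r. induction m as [m IH] using lt_wf_ind. intros r Hr.
  destruct m as [|m].
  - exists nil. simpl in *. repeat split; auto. lia.
  - destruct (Nat.lt_ge_cases r (fibF (S m))) as [Hlt|Hge].
    + destruct (IH m ltac:(lia) r Hlt) as [t [H1 [H2 [H3 _]]]].
      exists (false :: t). repeat split; simpl; auto. destruct t; simpl; auto.
    + destruct m as [|m].
      * exists (true :: nil). simpl in *. repeat split; auto; lia.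
      * rewrite fibF_SS in Hr.
        destruct (IH m ltac:(lia) (r - fibF (S (S m)))%nat ltac:(lia)) as [t [H1 [H2 [H3 _]]]].
        exists (true :: false :: t). repeat split.
        -- destruct t; simpl; auto.
        -- simpl. rewrite H2. reflexivity.
        -- rewrite !weight_cons. simpl length. rewrite H2, H3. lia.
        -- lia.
Qed.

Lemma nonadjacent_head_weight l : nonadjacent l -> (1 <= length l)%nat ->
  (nth 0 l false = true <-> (fibF (length l) <= weight l)%nat).
Proof.
  intros Hl Hlen. destruct l as [|[] t]; [simpl in Hlen; lia | |];
    rewrite weight_cons; cbn [nth length].
  - split; [lia | reflexivity].
  - pose proof (weight_lt_fibF t (nonadjacent_cons _ _ Hl)). split; [discriminate | lia].
Qed.

Lemma Fs_shape s b : Fs s b ->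
  nonadjacent b /\ length b = s /\ ((1 <= s)%nat -> nth 0 b false = true).
Proof.
  intros [m [e [Hz [Hl Hf]]]]. apply is_zeck_iff in Hz as [Hne [Hh [He _]]].
  rewrite <- (firstn_skipn s e), Hf in He. subst b.
  split; [exact (nonadjacent_app_l _ _ He)|]. split; [rewrite length_firstn; lia|].
  intros Hs. destruct s as [|s]; [lia|]. destruct e; [contradiction | exact Hh].
Qed.

(* Number of admissible [m]-digit tails after [b]. *)
Definition block_span (b : list bool) (m : nat) : nat :=
  if last b false then fibF m else fibF (S m).

Lemma LB_weight_shift s K b : LB s K b ->
  exists m, (weight_shift m b <= K < weight_shift m b + block_span b m)%nat /\
            (fibF (s + m) <= K < fibF (S (s + m)))%nat.
Proof.
  intros [e [Hz [Hl Hf]]]. apply is_zeck_iff in Hz as [Hne [Hh [He HK]]].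
  pose proof (weight_lt_fibF e He) as Hup.
  assert (Hlow : (fibF (length e) <= weight e)%nat).
  { apply nonadjacent_head_weight; auto. destruct e; [contradiction | simpl; lia]. }
  assert (Hlt : length (skipn s e) = (length e - s)%nat) by apply length_skipn.
  rewrite <- HK in Hup, Hlow.
  rewrite <- (firstn_skipn s e), Hf in He. rewrite <- (firstn_skipn s e), Hf, weight_app in HK.
  set (t := skipn s e) in *.
  pose proof (weight_lt_fibF t (nonadjacent_app_r _ _ He)) as Ht.
  exists (length t). split.
  - unfold block_span. destruct (last b false) eqn:Hlast; [|lia].
    pose proof (nonadjacent_app_junction _ _ He Hlast) as Hhead.
    destruct t as [|[] t']; [simpl in *; lia | discriminate |].
    pose proof (weight_lt_fibF t' (nonadjacent_cons _ _ (nonadjacent_app_r _ _ He))).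
    simpl in *. lia.
  - replace (s + length t)%nat with (length e) by lia. lia.
Qed.

Lemma weight_shift_LB s K b m : (1 <= s)%nat -> Fs s b ->
  (weight_shift m b <= K < weight_shift m b + block_span b m)%nat -> LB s K b.
Proof.
  intros Hs Hb HK. destruct (Fs_shape s b Hb) as [Hbn [Hbl Hbh]].
  assert (Hspan : (K - weight_shift m b < fibF (S m))%nat).
  { pose proof (fibF_le_S m). unfold block_span in HK. destruct (last b false); lia. }
  destruct (nonadjacent_repr m _ Hspan) as [t [Htn [Htl [Htw Hth]]]].
  exists (b ++ t). split; [|split].
  - apply is_zeck_iff. refine (conj _ (conj _ (conj _ _))).
    + destruct b; [simpl in Hbl; lia | discriminate].
    + destruct b; [simpl in Hbl; lia | exact (Hbh Hs)].
    + apply nonadjacent_app; auto. intros Hlast. apply Hth.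
      unfold block_span in HK. rewrite Hlast in HK. lia.
    + rewrite weight_app, Htw, Htl. lia.
  - rewrite length_app. lia.
  - rewrite firstn_app, Hbl, Nat.sub_diag, app_nil_r, <- Hbl. apply firstn_all.
Qed.

Lemma LB_iff_span s K b m : (1 <= s)%nat -> Fs s b ->
  (fibF (s + m) <= K < fibF (S (s + m)))%nat ->
  LB s K b <-> (weight_shift m b <= K < weight_shift m b + block_span b m)%nat.
Proof.
  intros Hs Hb HM. split; [|apply weight_shift_LB; auto].
  intros HLB. destruct (LB_weight_shift s K b HLB) as [m' [HK HM']].
  assert (s + m' = s + m)%nat by exact (fibF_bracket_unique K _ _ HM' HM).
  replace m with m' by lia. exact HK.
Qed.

Lemma last_true_false t : last (true :: false :: t) false = last t false.
Proof. destruct t; reflexivity. Qed.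

Lemma last_false_cons t : last (false :: t) false = last t false.
Proof. destruct t; reflexivity. Qed.

Lemma weight_shift_overflow c m : nonadjacent c -> S (weight c) = fibF (S (length c)) ->
  (weight_shift m c + block_span c m)%nat = fibF (S (length c + m)).
Proof.
  remember (length c) as L eqn:HL. revert c HL.
  induction L as [L IH] using lt_wf_ind. intros c HL Hc Hw.
  destruct c as [|[] c']; simpl length in HL; subst L.
  - unfold block_span. simpl. lia.
  - rewrite weight_cons in Hw. destruct c' as [|[] c2].
    + unfold block_span. cbn [last length weight_shift].
      replace (S (1 + m)) with (S (S m)) by lia. rewrite (fibF_SS m). simpl. lia.
    + destruct Hc; discriminate.
    + simpl length in *. rewrite weight_cons, (fibF_SS (S (length c2))) in Hw.
      assert (IHc2 := IH (length c2) ltac:(lia) c2 eq_refl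
                        (nonadjacent_cons _ _ (nonadjacent_cons _ _ Hc)) ltac:(lia)).
      unfold block_span in *. rewrite last_true_false, !weight_shift_cons. simpl length.
      rewrite !Nat.add_succ_l in *. rewrite (fibF_SS (S (length c2 + m))). lia.
  - exfalso. pose proof (weight_lt_fibF c' (nonadjacent_cons _ _ Hc)).
    pose proof (fibF_lt_S (S (length c')) ltac:(lia)).
    change (weight (false :: c')) with (0 + weight c')%nat in Hw. lia.
Qed.

Lemma weight_shift_succ c d m : nonadjacent c -> nonadjacent d -> length c = length d ->
  weight d = S (weight c) -> weight_shift m d = (weight_shift m c + block_span c m)%nat.
Proof.
  intros Hc Hd Hlen. remember (length c) as L eqn:HL. revert c d HL Hc Hd Hlen.
  induction L as [L IH] using lt_wf_ind. intros c d HL Hc Hd Hlen Hw.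
  destruct c as [|x c'], d as [|y d']; simpl in HL, Hlen; try lia.
  assert (Hl : length d' = length c') by lia. subst L.
  rewrite !weight_cons, Hl in Hw. rewrite !weight_shift_cons, Hl.
  pose proof (weight_lt_fibF c' (nonadjacent_cons _ _ Hc)) as Tc.
  pose proof (weight_lt_fibF d' (nonadjacent_cons _ _ Hd)) as Td. rewrite Hl in Td.
  destruct x, y.
  - destruct c' as [|[] c2], d' as [|[] d2]; simpl in Hl; try lia;
      try (destruct Hc; discriminate); try (destruct Hd; discriminate).
    simpl length in *. assert (Hl2 : length d2 = length c2) by lia.
    change (weight (false :: ?t)) with (0 + weight t)%nat in *.
    change (weight_shift m (false :: ?t)) with (0 + weight_shift m t)%nat.
    assert (IHc2 := IH (length c2) ltac:(lia) c2 d2 eq_refl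
      (nonadjacent_cons _ _ (nonadjacent_cons _ _ Hc))
      (nonadjacent_cons _ _ (nonadjacent_cons _ _ Hd)) (eq_sym Hl2) ltac:(lia)).
    unfold block_span in *. rewrite last_true_false. lia.
  - lia.
  - assert (Hd0 : weight d' = 0%nat) by lia.
    rewrite (weight_shift_weight0 d' m Hd0).
    assert (Hov := weight_shift_overflow c' m (nonadjacent_cons _ _ Hc) ltac:(lia)).
    unfold block_span in *. rewrite last_false_cons. lia.
  - assert (IHc' := IH (length c') ltac:(lia) c' d' eq_refl
      (nonadjacent_cons _ _ Hc) (nonadjacent_cons _ _ Hd) (eq_sym Hl) ltac:(lia)).
    unfold block_span in *. rewrite last_false_cons. lia.
Qed.

Definition has_successor (s : nat) (b : list bool) : Prop :=
  exists c, Fs s c /\ weight c = S (weight b).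

Lemma btilde_successor s b : has_successor s b ->
  Fs s (btilde s b) /\ weight (btilde s b) = S (weight b).
Proof.
  intros H. unfold btilde.
  match goal with |- context [epsilon ?i ?P] =>
    destruct (epsilon_spec i P) as [Hc | [Hn _]] end.
  - destruct H as [c Hc]. exists c. left. exact Hc.
  - exact Hc.
  - contradiction.
Qed.

Lemma btilde_no_successor s b : ~ has_successor s b -> btilde s b = special_block s.
Proof.
  intros H. unfold btilde.
  match goal with |- context [epsilon ?i ?P] =>
    destruct (epsilon_spec i P) as [Hc | [_ Hc]] end.
  - exists (special_block s). right. split; [exact H | reflexivity].
  - exfalso. apply H. eexists. exact Hc.
  - exact Hc.
Qed.

Lemma is_largest_no_successor s b : is_largest s b -> ~ has_successor s b.
Proof. intros [_ Hmax] [c [Hc Hw]]. specialize (Hmax c Hc). lia. Qed.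

Lemma no_successor_overflow s b : (1 <= s)%nat -> Fs s b -> ~ has_successor s b ->
  S (weight b) = fibF (S s).
Proof.
  intros Hs Hb Hnext. destruct (Fs_shape s b Hb) as [Hbn [Hbl Hbh]].
  pose proof (weight_lt_fibF b Hbn) as Hup. rewrite Hbl in Hup.
  destruct (Nat.eq_dec (S (weight b)) (fibF (S s))) as [E|NE]; [exact E|].
  exfalso. apply Hnext.
  destruct (nonadjacent_repr s (S (weight b)) ltac:(lia)) as [t [Htn [Htl [Htw _]]]].
  assert (Hlow : (fibF s <= weight b)%nat).
  { rewrite <- Hbl. apply nonadjacent_head_weight; [exact Hbn | lia | apply Hbh, Hs]. }
  assert (Hth : nth 0 t false = true).
  { apply (nonadjacent_head_weight t Htn ltac:(lia)). rewrite Htl. lia. }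
  exists t. split; [|exact Htw].
  exists (weight t), t. split; [|split].
  - apply is_zeck_iff. split; [destruct t; [simpl in Htl; lia | discriminate]|]. auto.
  - lia.
  - rewrite <- Htl. apply firstn_all.
Qed.

Lemma LB_iff_between s K b m : (1 <= s)%nat -> Fs s b ->
  (fibF (s + m) <= K < fibF (S (s + m)))%nat ->
  LB s K b <-> (weight_shift m b <= K)%nat /\
               (has_successor s b -> (K < weight_shift m (btilde s b))%nat).
Proof.
  intros Hs Hb HM. rewrite (LB_iff_span s K b m Hs Hb HM).
  destruct (Fs_shape s b Hb) as [Hbn [Hbl _]].
  destruct (classic (has_successor s b)) as [Hnext | Hnext].
  - destruct (btilde_successor s b Hnext) as [Ht Hwt].
    destruct (Fs_shape s _ Ht) as [Htn [Htl _]].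
    rewrite (weight_shift_succ b (btilde s b) m Hbn Htn ltac:(congruence) Hwt).
    split; [intros H; split; [lia | intros; lia] | intros [H1 H2]; specialize (H2 Hnext); lia].
  - pose proof (weight_shift_overflow b m Hbn) as Hov.
    rewrite Hbl in Hov. specialize (Hov (no_successor_overflow s b Hs Hb Hnext)).
    split; [intros H; split; [lia | contradiction] | intros [H1 _]; lia].
Qed.

(** * The golden ratio and the block [b_(l+1)] *)

Lemma sqrt5_sq : sqrt 5 * sqrt 5 = 5.
Proof. apply sqrt_sqrt. lra. Qed.

Lemma sqrt5_bounds : 2.236 < sqrt 5 < 2.2361.
Proof. pose proof sqrt5_sq. pose proof (sqrt_pos 5). split; nra. Qed.

Lemma phi_bounds : 1.618 < phi < 1.61806.
Proof. unfold phi. pose proof sqrt5_bounds. lra. Qed.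

Lemma phi_sq : phi * phi = phi + 1.
Proof. unfold phi. pose proof sqrt5_sq. nra. Qed.

Lemma omega_phi : omega * phi = 1.
Proof. unfold omega. pose proof phi_bounds. field. lra. Qed.

Lemma omega_eq : omega = phi - 1.
Proof.
  pose proof phi_bounds. pose proof phi_sq. pose proof omega_phi.
  apply Rmult_eq_reg_r with phi; [nra | lra].
Qed.

Lemma ln_phi_gt : 0.3 < ln phi.
Proof.
  pose proof phi_bounds. rewrite <- (ln_exp 0.3). apply ln_increasing; [apply exp_pos|].
  pose proof (exp_ineq1_le (-0.3)) as Hlow.
  assert (E : exp (-0.3) * exp 0.3 = 1) by (rewrite <- exp_plus, <- exp_0; f_equal; lra).
  pose proof (exp_pos 0.3). nra.
Qed.

Lemma Rpower_phi_pow n : Rpower phi (INR n) = phi ^ n.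
Proof. apply Rpower_pow. pose proof phi_bounds. lra. Qed.

Lemma Rpower_phi_m2 : Rpower phi (-2) = / (phi * phi).
Proof.
  replace (-2) with (- INR 2) by (simpl; lra).
  rewrite Rpower_Ropp, Rpower_phi_pow. simpl. rewrite Rmult_1_r. reflexivity.
Qed.

Lemma Rpower_phi_le1 x : x <= 0 -> 0 < Rpower phi x <= 1.
Proof.
  intros Hx. pose proof phi_bounds. split; [apply exp_pos|].
  rewrite <- (Rpower_O phi) by lra. apply Rle_Rpower; lra.
Qed.

Lemma Rpower_phi_ge x y : y <= x -> Rpower phi y <= Rpower phi x.
Proof. intros. apply Rle_Rpower; [pose proof phi_bounds; lra | lra]. Qed.

Fixpoint alt10 (j : nat) : list bool :=
  match j with O => nil | S j => true :: false :: alt10 j end.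

Lemma hatF_alt10_app j t : hatF (alt10 j ++ t) = phi + omega ^ (2 * j) * (hatF t - phi).
Proof.
  induction j as [|j IH]; [simpl; ring|].
  change (alt10 (S j) ++ t) with (true :: false :: (alt10 j ++ t)). cbn [hatF].
  rewrite IH. replace (2 * S j)%nat with (2 + 2 * j)%nat by lia. rewrite pow_add.
  transitivity (1 + omega * (omega * phi) + omega ^ 2 * omega ^ (2 * j) * (hatF t - phi)); [ring|].
  rewrite omega_phi, omega_eq at 1. ring.
Qed.

Lemma odd_2a1 a : Nat.odd (2 * a + 1) = true.
Proof. apply Nat.odd_spec. exists a. reflexivity. Qed.

Lemma odd_2a2 a : Nat.odd (2 * a + 2) = false.
Proof.
  rewrite <- Nat.negb_even. replace (2 * a + 2)%nat with (2 * (a + 1))%nat by lia.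
  rewrite Nat.even_mul. reflexivity.
Qed.

Lemma map_odd_alt10 j a : map Nat.odd (seq (2 * a + 1) (2 * j)) = alt10 j.
Proof.
  revert a; induction j as [|j IH]; intro a; [reflexivity|].
  replace (2 * S j)%nat with (S (S (2 * j))) by lia. cbn [seq map].
  rewrite odd_2a1. replace (S (2 * a + 1)) with (2 * a + 2)%nat by lia. rewrite odd_2a2.
  replace (S (2 * a + 2)) with (2 * S a + 1)%nat by lia. rewrite IH. reflexivity.
Qed.

Lemma special_block_even j : special_block (2 * j + 2) = alt10 j ++ true :: true :: nil.
Proof.
  unfold special_block. rewrite <- Nat.negb_odd, odd_2a2. cbn [negb]. rewrite seq_app, map_app.
  f_equal.
  - rewrite <- (map_odd_alt10 j 0). apply map_ext_in. intros k Hk. apply in_seq in Hk.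
    replace (Nat.eqb k (2 * j + 2)) with false by (symmetry; apply Nat.eqb_neq; lia).
    apply Bool.orb_false_r.
  - cbn [seq map]. replace (1 + 2 * j)%nat with (2 * j + 1)%nat by lia.
    replace (S (2 * j + 1)) with (2 * j + 2)%nat by lia.
    rewrite odd_2a1, Nat.eqb_refl, Bool.orb_true_r. reflexivity.
Qed.

Lemma special_block_odd j : special_block (2 * j + 3) = alt10 j ++ true :: true :: false :: nil.
Proof.
  unfold special_block.
  replace (Nat.even (2 * j + 3)) with false
    by (replace (2 * j + 3)%nat with (2 * (j + 1) + 1)%nat by lia;
        rewrite <- Nat.negb_odd, odd_2a1; reflexivity).
  rewrite seq_app, map_app. f_equal.
  - rewrite <- (map_odd_alt10 j 0). apply map_ext_in. intros k Hk. apply in_seq in Hk.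
    replace (Nat.eqb k (2 * j + 3 - 1)) with false by (symmetry; apply Nat.eqb_neq; lia).
    replace (Nat.ltb k (2 * j + 3)) with true by (symmetry; apply Nat.ltb_lt; lia).
    rewrite Bool.andb_true_r. apply Bool.orb_false_r.
  - cbn [seq map]. replace (1 + 2 * j)%nat with (2 * j + 1)%nat by lia.
    replace (S (2 * j + 1)) with (2 * j + 2)%nat by lia.
    replace (S (2 * j + 2)) with (2 * (j + 1) + 1)%nat by lia.
    rewrite odd_2a1, odd_2a2, odd_2a1.
    replace (Nat.ltb (2 * j + 1) (2 * j + 3)) with true by (symmetry; apply Nat.ltb_lt; lia).
    replace (Nat.eqb (2 * j + 2) (2 * j + 3 - 1)) with true by (symmetry; apply Nat.eqb_eq; lia).
    replace (Nat.ltb (2 * (j + 1) + 1) (2 * j + 3)) with false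
      by (symmetry; apply Nat.ltb_ge; lia).
    replace (Nat.eqb (2 * (j + 1) + 1) (2 * j + 3 - 1)) with false
      by (symmetry; apply Nat.eqb_neq; lia).
    reflexivity.
Qed.

Lemma hatF_special_block s : (2 <= s)%nat -> hatF (special_block s) = phi.
Proof.
  intros Hs. pose proof phi_sq.
  destruct (Nat.Even_or_Odd s) as [[j Hj]|[j Hj]]; (destruct j as [|j]; [lia|]).
  - replace s with (2 * j + 2)%nat by lia. rewrite special_block_even, hatF_alt10_app.
    simpl. rewrite omega_eq. nra.
  - replace s with (2 * j + 3)%nat by lia. rewrite special_block_odd, hatF_alt10_app.
    simpl. rewrite omega_eq. nra.
Qed.

(** * Binet's formula and the function 𝔉 *)

Definition binet (n : nat) : R := phi / sqrt 5 * (phi ^ n + (- omega) ^ n * omega ^ 2).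

Lemma cos_PI_INR n : cos (PI * INR n) = (-1) ^ n.
Proof.
  induction n as [|n IH]; [simpl; rewrite Rmult_0_r; apply cos_0|].
  rewrite S_INR, Rmult_plus_distr_l, Rmult_1_r, neg_cos, IH. simpl. ring.
Qed.

Lemma frakF_INR_binet n : frakF (INR n) = binet n.
Proof.
  unfold frakF, binet. rewrite Rpower_phi_pow, Rpower_Ropp, Rpower_phi_pow, Rpower_phi_m2.
  rewrite cos_PI_INR.
  replace (- omega) with (-1 * omega) by ring. rewrite Rpow_mult_distr.
  unfold omega. rewrite !pow_inv. simpl. rewrite Rmult_1_r. ring.
Qed.

Lemma binet_SS n : binet (S (S n)) = binet (S n) + binet n.
Proof.
  assert (Hfib : forall x, x * x = x + 1 -> x ^ S (S n) = x ^ S n + x ^ n)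
    by (intros x Hx; simpl; replace (x * (x * x ^ n)) with (x * x * x ^ n) by ring;
        rewrite Hx; ring).
  assert (Hom : - omega * - omega = - omega + 1).
  { pose proof omega_phi. pose proof omega_eq. pose proof phi_sq. nra. }
  unfold binet. rewrite (Hfib phi phi_sq), (Hfib _ Hom). ring.
Qed.

Lemma binet_0 : binet 0 = 1.
Proof.
  unfold binet. pose proof phi_bounds. pose proof sqrt5_sq. pose proof sqrt5_bounds.
  rewrite omega_eq. unfold phi in *. simpl. field_simplify_eq; nra.
Qed.

Lemma binet_1 : binet 1 = 1.
Proof.
  unfold binet. pose proof phi_bounds. pose proof sqrt5_sq. pose proof sqrt5_bounds.
  rewrite omega_eq. unfold phi in *. simpl. field_simplify_eq; nra.
Qed.

Lemma fibF_binet n : INR (fibF n) = binet n.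
Proof.
  induction n as [n IH] using lt_wf_ind.
  destruct n as [|[|n]]; [rewrite binet_0 | rewrite binet_1 |]; [reflexivity..|].
  rewrite fibF_SS, plus_INR, binet_SS, !IH by lia. reflexivity.
Qed.

Lemma frakF_INR n : frakF (INR n) = INR (fibF n).
Proof. rewrite frakF_INR_binet, fibF_binet. reflexivity. Qed.

Definition frakF_lead (x : R) : R := phi / sqrt 5 * Rpower phi x.

Lemma frakF_lead_err x : 0 <= x -> Rabs (frakF x - frakF_lead x) <= 1/2.
Proof.
  intros Hx. pose proof phi_bounds. pose proof sqrt5_bounds.
  destruct (Rpower_phi_le1 (- x) ltac:(lra)) as [Hu0 Hu1].
  pose proof (COS_bound (PI * x)) as Hc.
  unfold frakF, frakF_lead. rewrite Rpower_phi_m2.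
  replace (_ - _) with (/ (sqrt 5 * phi) * (Rpower phi (- x) * cos (PI * x)))
    by (field; lra).
  assert (Hinv : 0 < / (sqrt 5 * phi) <= 1 / 2).
  { split; [apply Rinv_0_lt_compat; nra|].
    apply Rmult_le_reg_l with (sqrt 5 * phi); [nra|]. rewrite Rinv_r; nra. }
  rewrite Rabs_mult, Rabs_right by lra.
  assert (Rabs (Rpower phi (- x) * cos (PI * x)) <= 1).
  { assert (Rabs (cos (PI * x)) <= 1) by (apply Rabs_le; exact Hc).
    rewrite Rabs_mult, Rabs_right by lra. pose proof (Rabs_pos (cos (PI * x))). nra. }
  pose proof (Rabs_pos (Rpower phi (- x) * cos (PI * x))). nra.
Qed.

Lemma fibF_lead_err n : Rabs (INR (fibF n) - phi / sqrt 5 * phi ^ n) <= 1/2.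
Proof.
  rewrite <- frakF_INR, <- Rpower_phi_pow. apply (frakF_lead_err (INR n)), pos_INR.
Qed.

Definition frakF_deriv (x : R) : R :=
  phi / sqrt 5 * (ln phi * Rpower phi x
    - Rpower phi (- x) * (ln phi * cos (PI * x) + PI * sin (PI * x)) / (phi * phi)).

Lemma frakF_derivative x : derivable_pt_lim frakF x (frakF_deriv x).
Proof.
  apply is_derive_Reals.
  assert (Hf : frakF = fun y => phi / sqrt 5 *
    (exp (y * ln phi) + exp (- y * ln phi) * cos (PI * y) / (phi * phi))).
  { apply functional_extensionality. intro y.
    unfold frakF. rewrite Rpower_phi_m2. reflexivity. }
  rewrite Hf. auto_derive; [exact I|]. unfold frakF_deriv, Rpower, Rdiv. ring.
Qed.

Lemma frakF_deriv_pos x : 2 <= x -> 0 < frakF_deriv x.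
Proof.
  intros Hx. pose proof phi_bounds. pose proof sqrt5_bounds. pose proof ln_phi_gt.
  pose proof PI_4. pose proof PI_RGT_0.
  pose proof (COS_bound (PI * x)). pose proof (SIN_bound (PI * x)).
  assert (HA : phi * phi <= Rpower phi x).
  { replace (phi * phi) with (Rpower phi (INR 2)) by (rewrite Rpower_phi_pow; simpl; ring).
    apply Rpower_phi_ge. simpl. lra. }
  unfold frakF_deriv. rewrite Rpower_Ropp.
  set (l := ln phi) in *. set (A := Rpower phi x) in *.
  set (T := l * cos (PI * x) + PI * sin (PI * x)).
  (* [T <= l + PI] while [l A^2 phi^2 >= l phi^6 > 17 l] *)
  assert (HT : T < l * (A * A * (phi * phi))).
  { assert (l * (phi * phi * (phi * phi) * (phi * phi)) <= l * (A * A * (phi * phi))).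
    { apply Rmult_le_compat_l; [lra|]. apply Rmult_le_compat_r; [nra|].
      apply Rmult_le_compat; nra. }
    assert (17 <= phi * phi * (phi * phi) * (phi * phi)).
    { assert (2.6 <= phi * phi) by nra. assert (6.7 <= phi * phi * (phi * phi)) by nra. nra. }
    assert (l * cos (PI * x) <= l) by nra. assert (PI * sin (PI * x) <= PI) by nra.
    unfold T. nra. }
  apply Rmult_lt_0_compat; [apply Rdiv_lt_0_compat; lra|]. apply Rlt_0_minus.
  assert (Hp2 : 0 < phi * phi) by nra. assert (HA0 : 0 < A) by lra.
  apply Rmult_lt_reg_r with (A * (phi * phi)); [apply Rmult_lt_0_compat; lra|].
  replace (/ A * T / (phi * phi) * (A * (phi * phi))) with T by (field; lra).
  nra.
Qed.

Lemma frakF_derivable : derivable frakF.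
Proof. intro x. exists (frakF_deriv x). apply frakF_derivative. Qed.

Lemma frakF_increasing a b : 2 <= a -> a < b -> frakF a < frakF b.
Proof.
  intros Ha Hab.
  apply (derive_increasing_interv 2 (b + 1) frakF frakF_derivable); try lra.
  intros t Ht.
  rewrite (derive_pt_eq_0 _ _ _ _ (frakF_derivative t)).
  apply frakF_deriv_pos. lra.
Qed.

Lemma frakF_lt_3 x : 1 <= x <= 2 -> frakF x < 3.
Proof.
  intros Hx. pose proof phi_bounds. pose proof sqrt5_bounds.
  pose proof (frakF_lead_err x ltac:(lra)) as Herr. apply Rabs_le_between' in Herr.
  assert (Hlead : frakF_lead x <= phi / sqrt 5 * (phi * phi)).
  { unfold frakF_lead. apply Rmult_le_compat_l; [apply Rlt_le, Rdiv_lt_0_compat; lra|].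
    replace (phi * phi) with (Rpower phi (INR 2)) by (rewrite Rpower_phi_pow; simpl; ring).
    apply Rpower_phi_ge. simpl. lra. }
  assert (phi / sqrt 5 * (phi * phi) < 2.4).
  { apply Rmult_lt_reg_r with (sqrt 5); [lra|].
    replace (phi / sqrt 5 * (phi * phi) * sqrt 5) with (phi * phi * phi) by (field; lra). nra. }
  lra.
Qed.

Lemma frakF_inv_spec K : (1 <= K)%nat ->
  1 <= frakF_inv (INR K) /\ frakF (frakF_inv (INR K)) = INR K.
Proof.
  intros HK. unfold frakF_inv.
  apply (epsilon_spec (inhabits 0) (fun x => 1 <= x /\ frakF x = INR K)).
  assert (H1 : frakF 1 = 1) by exact (frakF_INR 1).
  assert (HK1 : 1 <= INR K) by exact (le_INR 1 K HK).
  assert (HKF : INR K <= frakF (INR K)) by (rewrite frakF_INR; apply le_INR, fibF_ge_id).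
  destruct (IVT_cor (fun x => frakF x - INR K) 1 (INR K)) as [z [Hz1 Hz2]].
  - apply continuity_minus; [apply derivable_continuous, frakF_derivable | apply continuity_const].
    intros a b; reflexivity.
  - exact HK1.
  - rewrite H1. nra.
  - exists z. lra.
Qed.

Lemma frakF_inv_bracket K M : (3 <= K)%nat -> (fibF M <= K < fibF (S M))%nat ->
  INR M <= frakF_inv (INR K) < INR M + 1 /\ frakF (frakF_inv (INR K)) = INR K.
Proof.
  intros HK HF. destruct (frakF_inv_spec K ltac:(lia)) as [H1 H2].
  set (x := frakF_inv (INR K)) in *.
  assert (HK3 : 3 <= INR K) by (replace 3 with (INR 3) by (simpl; lra); apply le_INR, HK).
  assert (Hx2 : 2 <= x).
  { destruct (Rlt_or_le x 2) as [Hl|Hl]; [|exact Hl].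
    pose proof (frakF_lt_3 x ltac:(lra)). lra. }
  assert (HM2 : 2 <= INR M).
  { replace 2 with (INR 2) by (simpl; lra). apply le_INR.
    destruct M as [|[|M]]; simpl in HF; lia. }
  split; [split|exact H2].
  - destruct (Rlt_or_le x (INR M)) as [Hl|Hl]; [exfalso|exact Hl].
    pose proof (frakF_increasing x (INR M) Hx2 Hl) as Hinc. rewrite frakF_INR in Hinc.
    pose proof (le_INR (fibF M) K ltac:(lia)). lra.
  - destruct (Rlt_or_le x (INR M + 1)) as [Hl|Hl]; [exact Hl|exfalso].
    rewrite <- S_INR in Hl.
    assert (Hinc : frakF (INR (S M)) <= frakF x).
    { destruct Hl as [Hl|Hl]; [apply Rlt_le, frakF_increasing; rewrite ?S_INR in *; lra|].
      rewrite Hl. lra. }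
    rewrite frakF_INR in Hinc. pose proof (lt_INR K (fibF (S M)) ltac:(lia)). lra.
Qed.

Lemma hatF_nonneg c : 0 <= hatF c.
Proof.
  induction c as [|x c IH]; simpl; [lra|]. pose proof phi_bounds. pose proof omega_eq.
  destruct x; nra.
Qed.

Lemma hatF_le c : hatF c <= phi * phi.
Proof.
  induction c as [|x c IH]; simpl; pose proof phi_bounds; [nra|].
  pose proof omega_eq. pose proof phi_sq.
  assert (omega * hatF c <= omega * (phi * phi)) by (apply Rmult_le_compat_l; lra).
  destruct x; nra.
Qed.

Lemma hatF_ge1 c : nth 0 c false = true -> 1 <= hatF c.
Proof.
  destruct c as [|x c]; simpl; [discriminate|]. intros ->.
  pose proof (hatF_nonneg c). pose proof phi_bounds. pose proof omega_eq. nra.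
Qed.

Lemma weight_shift_err m c :
  Rabs (INR (weight_shift m c) - phi / sqrt 5 * phi ^ (length c + m) * hatF c)
  <= INR (length c) / 2.
Proof.
  induction c as [|x t IH].
  - simpl. rewrite Rmult_0_r, Rminus_0_r, Rabs_R0. lra.
  - rewrite weight_shift_cons, plus_INR. cbn [length hatF]. rewrite S_INR.
    set (n := (length t + m)%nat) in *. replace (S (length t) + m)%nat with (S n) by reflexivity.
    assert (Hshift : phi ^ S n * omega = phi ^ n).
    { transitivity (phi ^ n * (omega * phi)); [simpl; ring | rewrite omega_phi; ring]. }
    replace (phi / sqrt 5 * phi ^ S n * ((if x then 1 else 0) + omega * hatF t))
      with ((if x then phi / sqrt 5 * phi ^ S n else 0) + phi / sqrt 5 * phi ^ n * hatF t)
      by (rewrite <- Hshift; destruct x; ring).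
    destruct x.
    + pose proof (fibF_lead_err (S n)) as Hfib.
      replace ((INR (length t) + 1) / 2) with (1 / 2 + INR (length t) / 2) by field.
      eapply Rle_trans; [|apply Rplus_le_compat; [exact Hfib | exact IH]].
      eapply Rle_trans; [|apply Rabs_triang]. right. f_equal. ring.
    + simpl INR. rewrite !Rplus_0_l. lra.
Qed.

(** * Logarithms to base φ *)

Lemma ln_phi_pos : 0 < ln phi.
Proof. pose proof ln_phi_gt. lra. Qed.

Lemma logphi_Rpower t : logphi (Rpower phi t) = t.
Proof. unfold logphi. rewrite ln_Rpower. field. pose proof ln_phi_pos. lra. Qed.

Lemma logphi_mult a b : 0 < a -> 0 < b -> logphi (a * b) = logphi a + logphi b.
Proof. intros. unfold logphi. rewrite ln_mult by assumption. field. pose proof ln_phi_pos. lra. Qed.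

Lemma logphi_lt a b : 0 < a -> a < b -> logphi a < logphi b.
Proof.
  intros. unfold logphi. apply Rmult_lt_compat_r; [apply Rinv_0_lt_compat, ln_phi_pos|].
  apply ln_increasing; assumption.
Qed.

Lemma logphi_le a b : 0 < a -> a <= b -> logphi a <= logphi b.
Proof. intros Ha [Hab | <-]; [apply Rlt_le, logphi_lt | right]; auto. Qed.

Lemma logphi_1 : logphi 1 = 0.
Proof. unfold logphi. rewrite ln_1. unfold Rdiv. ring. Qed.

Lemma logphi_phi : logphi phi = 1.
Proof. unfold logphi. field. pose proof ln_phi_pos. lra. Qed.

Lemma logphi_hatF_bounds c : nth 0 c false = true -> 0 <= logphi (hatF c) <= 2.
Proof.
  intros Hc. pose proof (hatF_ge1 c Hc). pose proof (hatF_le c). pose proof phi_bounds.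
  rewrite <- logphi_1. replace 2 with (logphi (phi * phi))
    by (rewrite logphi_mult, logphi_phi by lra; ring).
  split; apply logphi_le; lra.
Qed.

Lemma neg_logphi_bound e : 0 <= e <= 1/4 -> 0 <= - logphi (1 - e) <= 5 * e.
Proof.
  intros He. pose proof ln_phi_gt.
  assert (Hln0 : ln (1 - e) <= 0).
  { rewrite <- ln_1. destruct (Req_dec e 0) as [->|]; [right; f_equal; ring|].
    apply Rlt_le, ln_increasing; lra. }
  (* [- ln (1 - e) = ln (1 / (1 - e)) <= 1 / (1 - e) - 1 = e / (1 - e)] *)
  assert (Hln : - ln (1 - e) <= e / (1 - e)).
  { rewrite <- ln_Rinv by lra. pose proof (exp_ineq1_le (ln (/ (1 - e)))) as Hexp.
    rewrite exp_ln in Hexp by (apply Rinv_0_lt_compat; lra).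
    replace (e / (1 - e)) with (/ (1 - e) - 1) by (field; lra). lra. }
  assert (e / (1 - e) <= 4 / 3 * e).
  { apply Rmult_le_reg_r with (1 - e); [lra|]. unfold Rdiv.
    rewrite Rmult_assoc, Rinv_l by lra. nra. }
  unfold logphi. replace (- (ln (1 - e) / ln phi)) with (- ln (1 - e) / ln phi) by (field; lra).
  split; [apply Rmult_le_pos; [lra | apply Rlt_le, Rinv_0_lt_compat; lra]|].
  apply Rmult_le_reg_r with (ln phi); [lra|]. unfold Rdiv.
  rewrite Rmult_assoc, Rinv_l by lra. nra.
Qed.

Lemma logphi_window h e y : 1 <= h -> 0 <= e <= 1/4 -> 0 < y ->
  (h - e <= y -> logphi h + logphi (1 - e) <= logphi y) /\
  (y < h + e -> logphi y < logphi h - logphi (1 - e)).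
Proof.
  intros Hh He Hy. split; intros Hhy.
  - rewrite <- logphi_mult by lra. apply logphi_le; nra.
  - assert (Hprod : logphi (1 + e) + logphi (1 - e) <= 0).
    { rewrite <- logphi_mult, <- logphi_1 by lra. apply logphi_le; nra. }
    apply Rlt_le_trans with (logphi (h * (1 + e))); [apply logphi_lt; nra|].
    rewrite logphi_mult by lra. lra.
Qed.

(** * Leading blocks as windows for [{𝔉^-1(K)}] *)

Definition rel_err (s K : nat) : R := INR (s + 1) * phi / (INR K - 1).

(* The threshold ensures [F_s <= K] and [rel_err s K <= 1/4]; below it, the value
   2 makes the window trivially wide. *)
Definition log_err (s K : nat) : R :=
  if Nat.leb (fibF s + 8 * (s + 1)) K then - logphi (1 - rel_err s K) else 2.

Lemma rel_err_bounds s K : (fibF s + 8 * (s + 1) <= K)%nat -> 0 <= rel_err s K <= 1/4.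
Proof.
  intros HK. pose proof phi_bounds. pose proof (fibF_pos s).
  assert (Hs : 1 <= INR (s + 1)) by (replace 1 with (INR 1) by reflexivity; apply le_INR; lia).
  assert (HK8 : 8 * INR (s + 1) <= INR K - 1).
  { replace 8 with (INR 8) by (simpl; lra). rewrite <- mult_INR.
    apply Rplus_le_reg_r with 1. replace (INR K - 1 + 1) with (INR K) by ring.
    replace 1 with (INR 1) at 1 by reflexivity. rewrite <- plus_INR. apply le_INR. lia. }
  unfold rel_err. split.
  - apply Rlt_le, Rdiv_lt_0_compat; nra.
  - apply Rmult_le_reg_r with (INR K - 1); [lra|]. unfold Rdiv.
    rewrite Rmult_assoc, Rinv_l by lra. nra.
Qed.

Lemma frac_part_between x (M : nat) : INR M <= x < INR M + 1 -> frac_part x = x - INR M.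
Proof.
  intros Hx. symmetry. apply (Int_part_frac_part_spec x (Z.of_nat M)); [lra|].
  rewrite <- INR_IZR_INZ. ring.
Qed.

Lemma Rpower_frac_window s m K c : (fibF s + 8 * (s + 1) <= K)%nat ->
  (fibF (s + m) <= K < fibF (S (s + m)))%nat -> length c = s ->
  ((weight_shift m c <= K)%nat ->
     hatF c - rel_err s K <= Rpower phi (frac_part (frakF_inv (INR K)))) /\
  ((K < weight_shift m c)%nat ->
     Rpower phi (frac_part (frakF_inv (INR K))) < hatF c + rel_err s K).
Proof.
  intros Hbig HM Hl. set (M := (s + m)%nat) in *.
  destruct (frakF_inv_bracket K M ltac:(lia) HM) as [Hx Hfx].
  set (x := frakF_inv (INR K)) in *. rewrite (frac_part_between x M Hx).
  pose proof phi_bounds. pose proof sqrt5_bounds. pose proof (pos_INR M).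
  set (Q := phi / sqrt 5 * phi ^ M).
  assert (HQ : 0 < Q) by (apply Rmult_lt_0_compat; [apply Rdiv_lt_0_compat | apply pow_lt]; lra).
  set (y := Rpower phi (x - INR M)).
  assert (Hlead : frakF_lead x = Q * y).
  { unfold frakF_lead, Q, y. rewrite <- Rpower_phi_pow, Rmult_assoc, <- Rpower_plus.
    replace (INR M + (x - INR M)) with x by ring. ring. }
  assert (EK := frakF_lead_err x ltac:(lra)). rewrite Hfx, Hlead in EK.
  assert (EV := weight_shift_err m c). rewrite Hl in EV. fold M Q in EV.
  assert (EF := fibF_lead_err (S M)).
  replace (phi / sqrt 5 * phi ^ S M) with (phi * Q) in EF by (unfold Q; simpl; ring).
  apply Rabs_le_between' in EK, EV, EF.
  assert (HKF : INR K + 1 <= INR (fibF (S M))) by (rewrite <- S_INR; apply le_INR; lia).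
  (* The additive errors [1/2 + s/2] are absorbed by the relative error [rel_err s K]. *)
  assert (HeQ : INR s + 1 <= rel_err s K * Q).
  { assert (H8 : 8 <= INR K - 1).
    { replace 8 with (INR 9 - 1) by (simpl; lra). apply Rplus_le_compat_r, le_INR.
      pose proof (fibF_pos s). lia. }
    unfold rel_err. rewrite plus_INR. simpl (INR 1).
    replace ((INR s + 1) * phi / (INR K - 1) * Q) with ((INR s + 1) * (phi * Q) / (INR K - 1))
      by (field; lra).
    apply Rmult_le_reg_r with (INR K - 1); [lra|]. unfold Rdiv.
    rewrite Rmult_assoc, Rinv_l, Rmult_1_r by lra. apply Rmult_le_compat_l; lra. }
  split; intros HV; [apply le_INR in HV | apply lt_INR in HV].
  - apply Rmult_le_reg_l with Q; [exact HQ|]. nra.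
  - apply Rmult_lt_reg_l with Q; [exact HQ|]. nra.
Qed.

Lemma frac_window s m K c : (fibF s + 8 * (s + 1) <= K)%nat ->
  (fibF (s + m) <= K < fibF (S (s + m)))%nat -> length c = s -> 1 <= hatF c ->
  ((weight_shift m c <= K)%nat ->
     logphi (hatF c) - log_err s K <= frac_part (frakF_inv (INR K))) /\
  ((K < weight_shift m c)%nat ->
     frac_part (frakF_inv (INR K)) < logphi (hatF c) + log_err s K).
Proof.
  intros Hbig HM Hl Hh.
  unfold log_err. rewrite (proj2 (Nat.leb_le _ _) Hbig).
  destruct (Rpower_frac_window s m K c Hbig HM Hl) as [Hlow Hup].
  set (f := frac_part (frakF_inv (INR K))) in *.
  destruct (logphi_window (hatF c) (rel_err s K) (Rpower phi f) Hh (rel_err_bounds s K Hbig)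
              (exp_pos _)) as [Llow Lup].
  rewrite logphi_Rpower in Llow, Lup.
  split; intros HV; [specialize (Llow (Hlow HV)) | specialize (Lup (Hup HV))]; lra.
Qed.

Lemma frac_window_LB s b K : (1 <= s)%nat -> Fs s b -> LB s K b ->
  logphi (hatF b) - log_err s K <= frac_part (frakF_inv (INR K)) /\
  (has_successor s b ->
     frac_part (frakF_inv (INR K)) < logphi (hatF (btilde s b)) + log_err s K).
Proof.
  intros Hs Hb HLB. pose proof (base_fp (frakF_inv (INR K))).
  destruct (Fs_shape s b Hb) as [_ [Hbl Hbh]]. specialize (Hbh Hs).
  destruct (Nat.leb_spec (fibF s + 8 * (s + 1)) K) as [Hbig | Hsmall].
  - destruct (fibF_bracket_ge s K ltac:(lia)) as [m HM].
    apply (LB_iff_between s K b m Hs Hb HM) in HLB as [Hlow Hup]. split.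
    + apply (frac_window s m K b Hbig HM Hbl (hatF_ge1 b Hbh)), Hlow.
    + intros Hnext. destruct (btilde_successor s b Hnext) as [Ht _].
      destruct (Fs_shape s _ Ht) as [_ [Htl Hth]].
      apply (frac_window s m K _ Hbig HM Htl (hatF_ge1 _ (Hth Hs))), Hup, Hnext.
  - unfold log_err. rewrite (proj2 (Nat.leb_gt _ _) Hsmall).
    pose proof (logphi_hatF_bounds b Hbh). split; [lra|].
    intros Hnext. destruct (Fs_shape s _ (proj1 (btilde_successor s b Hnext))) as [_ [_ Hth]].
    pose proof (logphi_hatF_bounds _ (Hth Hs)). lra.
Qed.

Lemma frac_window_not_LB s b K : (1 <= s)%nat -> Fs s b -> ~ LB s K b ->
  frac_part (frakF_inv (INR K)) < logphi (hatF b) + log_err s K \/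
  (has_successor s b /\
     logphi (hatF (btilde s b)) - log_err s K <= frac_part (frakF_inv (INR K))).
Proof.
  intros Hs Hb HLB. pose proof (base_fp (frakF_inv (INR K))).
  destruct (Fs_shape s b Hb) as [_ [Hbl Hbh]]. specialize (Hbh Hs).
  destruct (Nat.leb_spec (fibF s + 8 * (s + 1)) K) as [Hbig | Hsmall].
  - destruct (fibF_bracket_ge s K ltac:(lia)) as [m HM].
    rewrite (LB_iff_between s K b m Hs Hb HM) in HLB.
    destruct (Nat.lt_ge_cases K (weight_shift m b)) as [Hlt | Hge].
    + left. apply (frac_window s m K b Hbig HM Hbl (hatF_ge1 b Hbh)), Hlt.
    + right. destruct (classic (has_successor s b)) as [Hnext | Hnext];
        [|exfalso; apply HLB; split; [exact Hge | contradiction]].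
      split; [exact Hnext|].
      destruct (Fs_shape s _ (proj1 (btilde_successor s b Hnext))) as [_ [Htl Hth]].
      apply (frac_window s m K _ Hbig HM Htl (hatF_ge1 _ (Hth Hs))).
      destruct (Nat.lt_ge_cases K (weight_shift m (btilde s b))) as [Hlt' | Hge']; [|exact Hge'].
      exfalso. apply HLB. split; [exact Hge | intros _; exact Hlt'].
  - left. unfold log_err. rewrite (proj2 (Nat.leb_gt _ _) Hsmall).
    pose proof (logphi_hatF_bounds b Hbh). lra.
Qed.

Lemma frac_window_largest s b y : (2 <= s)%nat -> ~ has_successor s b ->
  frac_part y < logphi (hatF (btilde s b)).
Proof.
  intros Hs Hnext. rewrite btilde_no_successor, hatF_special_block, logphi_phi by assumption.
  apply base_fp.
Qed.

Lemma Un_cv_0_Rabs_le (u v : nat -> R) :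
  (forall n, Rabs (u n) <= Rabs (v n)) -> Un_cv v 0 -> Un_cv u 0.
Proof.
  intros Huv Hv e He. destruct (Hv e He) as [N HN]. exists N. intros n Hn.
  specialize (HN n Hn). unfold R_dist in *. rewrite Rminus_0_r in *.
  eapply Rle_lt_trans; [apply Huv | exact HN].
Qed.

Lemma log_err_cv s (K : nat -> nat) :
  (forall M : nat, exists N : nat, forall n, (N <= n)%nat -> (M <= K n)%nat) ->
  Un_cv (fun n => log_err s (K n)) 0.
Proof.
  intros HK e He.
  destruct (INR_unbounded (1 + 10 * INR (s + 1) / e)) as [K0 HK0].
  destruct (HK (K0 + fibF s + 8 * (s + 1))%nat) as [N HN].
  exists N. intros n Hn. specialize (HN n Hn).
  assert (Hbig : (fibF s + 8 * (s + 1) <= K n)%nat) by lia.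
  unfold R_dist, log_err. rewrite Rminus_0_r, (proj2 (Nat.leb_le _ _) Hbig).
  destruct (neg_logphi_bound _ (rel_err_bounds s _ Hbig)) as [H0 H5].
  rewrite Rabs_right by lra. apply Rle_lt_trans with (1 := H5).
  pose proof phi_bounds.
  assert (Hs : 0 < INR (s + 1)) by (apply lt_0_INR; lia).
  assert (HKn : INR K0 <= INR (K n)) by (apply le_INR; lia).
  assert (Hlarge : 10 * INR (s + 1) < e * (INR (K n) - 1)).
  { replace (10 * INR (s + 1)) with (e * (10 * INR (s + 1) / e)) by (field; lra).
    apply Rmult_lt_compat_l; lra. }
  assert (HK1 : 0 < INR (K n) - 1) by nra.
  unfold rel_err. apply Rmult_lt_reg_r with (INR (K n) - 1); [exact HK1|].
  replace (5 * (INR (s + 1) * phi / (INR (K n) - 1)) * (INR (K n) - 1))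
    with (5 * INR (s + 1) * phi) by (field; lra).
  nra.
Qed.

Lemma window_iff (P : nat -> Prop) (A : Prop) (x d : nat -> R) (L U : R) :
  Un_cv d 0 ->
  (forall n, P n -> L - d n <= x n /\ (A -> x n < U + d n)) ->
  (~ A -> forall n, x n < U) ->
  (forall n, ~ P n -> x n < L + d n \/ (A /\ U - d n <= x n)) ->
  exists gamma gammat : nat -> R,
    Un_cv gamma 0 /\ Un_cv gammat 0 /\ (~ A -> forall n, gammat n = 0) /\
    forall n, P n <-> L + gamma n <= x n /\ x n < U + gammat n.
Proof.
  intros Hd Hin Htop Hout.
  (* Choosing the sign of the errors by membership in [P] makes the two implications
     an equivalence. *)
  exists (fun n => if excluded_middle_informative (P n) then - d n else d n),
         (fun n => if excluded_middle_informative A then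
                     (if excluded_middle_informative (P n) then d n else - d n) else 0).
  split; [|split; [|split]].
  - apply (Un_cv_0_Rabs_le _ d); [|exact Hd]. intros n.
    destruct (excluded_middle_informative (P n)); rewrite ?Rabs_Ropp; lra.
  - apply (Un_cv_0_Rabs_le _ d); [|exact Hd]. intros n.
    destruct (excluded_middle_informative A); [|rewrite Rabs_R0; apply Rabs_pos].
    destruct (excluded_middle_informative (P n)); rewrite ?Rabs_Ropp; lra.
  - intros HA n. destruct (excluded_middle_informative A); [contradiction | reflexivity].
  - intros n. destruct (excluded_middle_informative (P n)) as [HP | HP];
      destruct (excluded_middle_informative A) as [HA | HA].
    + destruct (Hin n HP) as [H1 H2]. specialize (H2 HA). split; [intros _; lra | tauto].
    + destruct (Hin n HP) as [H1 _]. specialize (Htop HA n). split; [intros _; lra | tauto].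
    + split; [contradiction|]. intros [H1 H2]. destruct (Hout n HP) as [H | [_ H]]; lra.
    + split; [contradiction|]. intros [H1 H2]. destruct (Hout n HP) as [H | [H _]]; [lra | tauto].
Qed.

Theorem lemma4p4 (K : nat -> nat) (s : nat) (b : list bool)
  (HKpos : forall n, (0 < K n)%nat)
  (HKinf : forall M : nat, exists N : nat, forall n, (N <= n)%nat -> (M <= K n)%nat)
  (Hs : (2 <= s)%nat) (Hb : Fs s b) :
  exists gamma gammat : nat -> R,
    Un_cv gamma 0 /\ Un_cv gammat 0 /\
    (is_largest s b -> forall n, gammat n = 0) /\
    forall n : nat,
      LB s (K n) b <->
      (logphi (hatF b) + gamma n <= frac_part (frakF_inv (INR (K n))) /\
       frac_part (frakF_inv (INR (K n))) < logphi (hatF (btilde s b)) + gammat n).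
Proof.
  destruct (window_iff (fun n => LB s (K n) b) (has_successor s b)
              (fun n => frac_part (frakF_inv (INR (K n)))) (fun n => log_err s (K n))
              (logphi (hatF b)) (logphi (hatF (btilde s b))))
    as [gamma [gammat [Hg [Hgt [Hzero Hiff]]]]].
  - exact (log_err_cv s K HKinf).
  - intros n. apply frac_window_LB; [lia | exact Hb].
  - intros Hnext n. apply frac_window_largest; assumption.
  - intros n. apply frac_window_not_LB; [lia | exact Hb].
  - exists gamma, gammat. split; [exact Hg|]. split; [exact Hgt|]. split; [|exact Hiff].
    intros Hlargest. apply Hzero, is_largest_no_successor, Hlargest.
Qed.
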